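(* A responsive social choice function $f:\Theta\to Z$ satisfies strict event monotonicity if and only if it satisfies strict iterated-elimination monotonicity.
   Context: Setting: $\mathcal{I}$ is a finite set of agents with $|\mathcal{I}|\ge3$; $\Theta$ is a finite set of $n$ states; $Z$ is a countable set of pure outcomes; $Y=\Delta(Z)$ is the set of lotteries on $Z$, each $z\in Z$ identified with the degenerate lottery. Each agent $i$ has at each state $\theta$ a utility $u_i(\cdot,\theta):Z\to\mathbb{R}$, extended to $Y$ by expected utility $u_i(y,\theta)=\sum_z y_zu_i(z,\theta)$. An SCF is a map $f:\Theta\to Z$ (assumed throughout with $|f(\Theta)|\ge2$); it is responsive if it is injective. Active agents: $\mathcal{I}^{\theta}=\{i\in\mathcal{I}:\exists z\in Z,\ u_i(f(\theta),\theta)>u_i(z,\theta)\}$; for nonempty $E\subseteq\Theta$, $\mathcal{I}^E=\bigcap_{\theta\in E}\mathcal{I}^\theta$. Strict event monotonicity: for every $\theta'\in\Theta$ and nonempty $E\subseteq\Theta$, if for all $\theta\in E$, $y\in Y$, $i\in\mathcal{I}^E$ we have [$u_i(f(\theta),\theta)>u_i(y,\theta)\Rightarrow u_i(f(\theta),\theta')\ge u_i(y,\theta')$], then $f(E)=\{f(\theta')\}$. Strict iterated-elimination monotonicity: for every $\theta'\in\Theta$ there exists $(\theta^1,\dots,\theta^n)$ with $\{\theta^1,\dots,\theta^n\}=\Theta$ and $\theta^n=\theta'$ such that for every $k\in\{1,\dots,n-1\}$ there exist $y\in Y$ and $i\in\mathcal{I}^{\{\theta^k,\theta^{k+1},\dots,\theta^n\}}$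 with $u_i(f(\theta^k),\theta^k)>u_i(y,\theta^k)$ and $u_i(y,\theta')>u_i(f(\theta^k),\theta')$. *)

From HB Require Import structures.
From mathcomp Require Import all_boot all_order all_algebra.
From mathcomp Require Import reals.
Set Implicit Arguments. Unset Strict Implicit. Unset Printing Implicit Defensive.
Import Order.TTheory GRing.Theory Num.Theory.
Local Open Scope ring_scope.

Section Defs.
Variables (R : realType) (I Theta : finType) (Z : countType).

(* A (finitely supported) lottery on Z: a list of (outcome, probability)
   pairs with nonnegative weights summing to 1 (repetitions allowed). *)
Definition lottery := seq (Z * R).

Definition is_lottery (y : lottery) : Prop :=
  all (fun p => 0 <= p.2) y /\ \sum_(p <- y) p.2 = 1.

Definition dirac_lottery (z : Z) : lottery := [:: (z, 1)].

Definition EU (v : Z -> R) (y : lottery) : R := \sum_(p <- y) p.2 * v p.1.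

Variables (u : I -> Z -> Theta -> R) (f : Theta -> Z).

Definition active (theta : Theta) (i : I) : Prop :=
  exists z : Z, u i (f theta) theta > u i z theta.

Definition active_event (E : {set Theta}) (i : I) : Prop :=
  forall theta, theta \in E -> active theta i.

Definition strict_event_monotonicity : Prop :=
  forall (theta' : Theta) (E : {set Theta}),
    E != set0 ->
    (forall theta (y : lottery) i,
        theta \in E -> is_lottery y -> active_event E i ->
        u i (f theta) theta > EU (u i ^~ theta) y ->
        u i (f theta) theta' >= EU (u i ^~ theta') y) ->
    (forall theta, theta \in E -> f theta = f theta').

(* The sequence (theta^1,...,theta^n) is  rcons s theta'  (so theta^n = theta'),
   required to enumerate Theta without repetition; theta^k = nth theta' s (k-1)
   and {theta^k,...,theta^n} = drop (k-1) (rcons s theta'). *)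
Definition strict_iterated_elimination_monotonicity : Prop :=
  forall theta' : Theta,
    exists s : seq Theta,
      perm_eq (rcons s theta') (enum Theta) /\
      forall k : nat, (k < size s)%N ->
        let thk := nth theta' s k in
        exists (y : lottery) (i : I),
          [/\ is_lottery y,
              active_event [set x | x \in drop k (rcons s theta')] i,
              u i (f thk) thk > EU (u i ^~ thk) y &
              EU (u i ^~ theta') y > u i (f thk) theta'].

End Defs.

(* Fix theta' and list the states theta^1, ..., theta^(n-1), theta' so that
   each theta^k is eliminated by an agent active on its whole tail
   {theta^k, ..., theta'}.  Given such an order and an event E, the first state
   of the order lying in E has all of E in its tail, so it breaks the premise
   of strict event monotonicity for E; hence E can only be {theta'}.
   Conversely, starting from E = Theta, as long as E is not {theta'}
   responsiveness forbids f(E) = {f theta'}, so the contrapositive of strict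
   event monotonicity yields a state of E to eliminate, and we recurse on the
   smaller event. *)
From HB Require Import structures.
From mathcomp Require Import all_boot all_order all_algebra.
From mathcomp Require Import reals.
From Stdlib Require Import Classical.
Import Order.TTheory GRing.Theory Num.Theory.
Local Open Scope ring_scope.

Lemma mem_drop_find (T : eqType) (a : pred T) (s : seq T) (x : T) :
  x \in s -> a x -> x \in drop (find a s) s.
Proof.
elim: s => //= y s IH; case: ifP => [_ xs _ | ay]; first by rewrite drop0.
by rewrite inE => /orP [/eqP-> | xs ax]; [rewrite ay | exact: IH].
Qed.

Section Elimination.
Context {R : realType} {I Theta : finType} {Z : countType}.
Context {u : I -> Z -> Theta -> R} {f : Theta -> Z}.

Definition eliminates (E : {set Theta}) (theta' theta : Theta) : Prop :=
  exists (y : lottery R Z) (i : I),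
    [/\ is_lottery y, active_event u f E i,
        u i (f theta) theta > EU (u i ^~ theta) y &
        EU (u i ^~ theta') y > u i (f theta) theta'].

Definition elimination_sequence (theta' : Theta) (s : seq Theta) : Prop :=
  forall k, (k < size s)%N ->
    eliminates [set x | x \in drop k (rcons s theta')] theta' (nth theta' s k).

Lemma active_event_sub {E F : {set Theta}} {i : I} :
  E \subset F -> active_event u f F i -> active_event u f E i.
Proof. by move=> /subsetP sEF aF theta /sEF; exact: aF. Qed.

Lemma eliminates_neq {E : {set Theta}} {theta' theta : Theta} :
  eliminates E theta' theta -> theta != theta'.
Proof.
move=> [y [i [_ _ lt_f_y lt_y_f]]]; apply/eqP => eq_theta.
by move: lt_y_f; rewrite -eq_theta => /(lt_trans lt_f_y); rewrite ltxx.
Qed.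

Lemma elimination_sequence_cons {theta' theta : Theta} {s : seq Theta} :
  eliminates [set x | x \in theta :: rcons s theta'] theta' theta ->
  elimination_sequence theta' s -> elimination_sequence theta' (theta :: s).
Proof. by move=> elim_theta elim_s [|k] //= /elim_s. Qed.

Section FromEventMonotonicity.
Hypotheses (inj_f : injective f) (sem : strict_event_monotonicity u f).

Lemma sem_eliminates {theta' : Theta} {E : {set Theta}} :
  theta' \in E -> E != [set theta'] ->
  exists2 theta, theta \in E & eliminates E theta' theta.
Proof.
move=> theta'E nE1; apply: NNPP => no_elim.
have premise theta y i : theta \in E -> is_lottery y -> active_event u f E i ->
    u i (f theta) theta > EU (u i ^~ theta) y ->
    u i (f theta) theta' >= EU (u i ^~ theta') y.
  move=> thetaE ly ai lt_y; rewrite leNgt; apply/negP => lt_f.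
  by apply: no_elim; exists theta => //; exists y, i.
have E0 : E != set0 by apply/set0Pn; exists theta'.
have f_const := sem theta' E E0 premise.
case/eqP: nE1; apply/setP => x; rewrite inE.
by apply/idP/eqP => [/f_const/inj_f | ->].
Qed.

Lemma sem_elimination_sequence {theta' : Theta} {E : {set Theta}} :
  theta' \in E ->
  exists s, perm_eq (rcons s theta') (enum E) /\ elimination_sequence theta' s.
Proof.
have [n] := ubnP #|E|; elim: n E => // n IH E /ltnSE cardE theta'E.
have [-> | nE1] := eqVneq E [set theta'].
  by exists [::]; rewrite enum_set1.
have [theta thetaE elim_theta] := sem_eliminates theta'E nE1.
have theta'E' : theta' \in E :\ theta.
  by rewrite !inE eq_sym (eliminates_neq elim_theta).
have cardE' : (#|E :\ theta| < n)%N.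
  by rewrite (cardsD1 theta E) thetaE in cardE.
have [s [perm_s elim_s]] := IH _ cardE' theta'E'.
have perm_theta_s : perm_eq (theta :: rcons s theta') (enum E).
  apply: perm_trans (_ : perm_eq (theta :: enum (E :\ theta)) _).
    by rewrite perm_cons.
  apply: uniq_perm; rewrite ?enum_uniq //= ?mem_enum ?setD11 ?enum_uniq //.
  by move=> x; rewrite inE !mem_enum !inE; case: eqVneq => // ->.
exists (theta :: s); split => //; apply: elimination_sequence_cons elim_s.
suff -> : [set x | x \in theta :: rcons s theta'] = E by [].
by apply/setP => x; rewrite inE (perm_mem perm_theta_s) mem_enum.
Qed.

End FromEventMonotonicity.

Lemma siem_sem :
  strict_iterated_elimination_monotonicity u f -> strict_event_monotonicity u f.
Proof.
move=> siem theta' E _ premise theta0 theta0E.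
have [s [perm_s elim_s]] := siem theta'.
have mem_s x : x \in rcons s theta' by rewrite (perm_mem perm_s) mem_enum.
have [hasE | /hasPn noE] := boolP (has [in E] s); last first.
  move: (mem_s theta0); rewrite mem_rcons inE => /orP [/eqP -> // | /noE].
  by rewrite theta0E.
set k := find [in E] s; have lt_k : (k < size s)%N by rewrite -has_find.
have [y [i [ly ai lt_f_y lt_y_f]]] := elim_s k lt_k.
have E_tail : E \subset [set x | x \in drop k (rcons s theta')].
  apply/subsetP => x xE; rewrite inE drop_rcons ?(ltnW lt_k) // mem_rcons inE.
  move: (mem_s x); rewrite mem_rcons inE => /orP [-> // | xs].
  by rewrite mem_drop_find ?orbT.
have thetakE := nth_find theta' hasE.
have := premise _ _ _ thetakE ly (active_event_sub E_tail ai) lt_f_y.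
by rewrite leNgt lt_y_f.
Qed.

End Elimination.

Theorem proposition1 (R : realType) (I Theta : finType) (Z : countType)
    (u : I -> Z -> Theta -> R) (f : Theta -> Z) :
  (2 < #|I|)%N ->
  (exists theta1 theta2 : Theta, f theta1 <> f theta2) ->
  injective f ->
  (strict_event_monotonicity u f <->
   strict_iterated_elimination_monotonicity u f).
Proof.
move=> _ _ inj_f; split => [sem theta' | /siem_sem //].
have [s [perm_s elim_s]] := sem_elimination_sequence inj_f sem (in_setT theta').
by exists s; rewrite enumT -enum_setT.
Qed.
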